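(* Let $(C^\gamma_{\alpha\beta},\eta,e)$ be a semisimple Frobenius manifold on $\mathcal U\subset\mathbb C^n$, with $L_\alpha=\partial/\partial x^\alpha-\hbar^{-1}C_\alpha(x)$, and let $T$ be a dressing transformation for $\{L_\alpha\}$ and $\widetilde T$ one for $\{\widetilde L_i\}$ (see context). For $b\in Diag((\hbar))$ put $\varphi(b)=TbT^{-1}$, $\widetilde\varphi(b)=\widetilde Tb\widetilde T^{-1}$. Then for every $b\in Diag((\hbar))$ and all $\alpha,i$: $$[L_\alpha,\varphi(b)_{\le-1}]=\hbar^{-1}[C_\alpha,\varphi(b)_0],\qquad [\widetilde L_i,\widetilde\varphi(b)_{\le0}]=[e_i,\widetilde\varphi(b)_1].$$
   Context: Frobenius manifold in flat coordinates $x^\alpha$: analytic $C^\gamma_{\alpha\beta}(x)$, constant nondegenerate symmetric $\eta_{\alpha\beta}$, product $\partial_\alpha\circ\partial_\beta=\sum_\gamma C^\gamma_{\alpha\beta}\partial_\gamma$ commutative associative with unit $\partial/\partial x^1$, $\eta$ invariant, $(C_\alpha)^\gamma_\beta=C^\gamma_{\alpha\beta}$, and the $L_\alpha$ pairwise commute. Semisimple: $T_x\mathcal U=\oplus_i\theta_i$ with one-dimensional common eigenspaces of all multiplication operators. With $T_0(x)$ the matrix of columns $v_i(x)\in\theta_i\setminus0$, one has $T_0^{-1}C_\alpha T_0=a_\alpha=\partial u/\partial x^\alpha$ diagonal, $u=diag(u^1,\dots,u^n)$ gives coordinates, and $\widetilde L_i=\sum_\alpha\frac{\partial x^\alpha}{\partial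 u^i}T_0^{-1}L_\alpha T_0=\partial/\partial u^i+q_i(u)-\hbar^{-1}e_i$, $(e_i)_{jk}=\delta_{ij}\delta_{ik}$. A dressing transformation for $\{L_\alpha\}$ is $T(\hbar,x)\in Mat(n,\mathbb C)[[\hbar]]$, invertible, with $T^{-1}L_\alpha T=\partial/\partial x^\alpha+h_\alpha$, $h_\alpha\in\hbar^{-1}Diag[[\hbar]]$ for all $\alpha$ (it exists and is unique up to right multiplication by $Diag[[\hbar]]$-valued functions, so $\varphi(b)$ is well defined); a dressing transformation for $\{\widetilde L_i\}$ is $\widetilde T=Id+\sum_{k\ge1}\hbar^k\widetilde T_k(u)$ with $\widetilde T^{-1}\widetilde L_i\widetilde T=\partial/\partial u^i-e_i\hbar^{-1}+\sum_{k\ge0}\hbar^kh_{k,i}$, $h_{k,i}$ diagonal. $Diag((\hbar))$: formal Laurent series in $\hbar$ with diagonal-matrix coefficients. For a Laurent series $v=\sum_l v_l\hbar^l$: $v_j$ is the coefficient of $\hbar^j$, $v_{\le k}=\sum_{l\le k}v_l\hbar^l$. For an operator $D=\partial+A$ and a matrix function $M$, $[D,M]=\partial M+[A,M]$. *)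

From HB Require Import structures.
From mathcomp Require Import all_boot all_order all_algebra.
From mathcomp Require Import all_classical all_reals all_analysis.
From mathcomp Require Export complex.
Set Implicit Arguments. Unset Strict Implicit. Unset Printing Implicit Defensive.
Import Order.TTheory GRing.Theory Num.Theory.
Import numFieldNormedType.Exports.
Local Open Scope ring_scope.

Section Defs.
Variables (K : numFieldType) (n : nat).

Notation pt := 'rV[K]_n.
Notation mat := 'M[K]_n.

(* the coordinate vector field d/dx^a, as a direction in K^n *)
Definition cvec (a : 'I_n) : pt := delta_mx 0 a.

Definition pd (a : 'I_n) (f : pt -> mat) (x : pt) : mat := 'D_(cvec a) f x.

(* holomorphic on U (complex Frechet differentiability) *)
Definition holo_on {V : normedModType K} (U : set pt) (f : pt -> V) :=
  forall x, U x -> differentiable f x.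

Definition open_set (U : set pt) := open U.

(* A Laurent series with matrix coefficients: k |-> coefficient of hbar^k. *)
(* A (lower) bound for the support, chosen classically; 0 if none exists. *)
Definition lowb (a : int -> mat) : int :=
  match pselect (exists N : int, forall k, k < N -> a k = 0) with
  | left P => projT1 (cid P)
  | right _ => 0
  end.

(* Cauchy product of Laurent series (correct whenever both supports are
   bounded below, which is the case for all series in Mat((hbar))). *)
Definition mulL (a b : int -> mat) (k : int) : mat :=
  \sum_(t < (absz (k - lowb a - lowb b)%R).+1)
     a (lowb a + t%:Z) *m b (k - lowb a - t%:Z).

(* x-dependent Laurent series: k |-> (x |-> coefficient of hbar^k) *)
Definition ser := int -> pt -> mat.

Definition mulS (a b : ser) : ser :=
  fun k x => mulL (fun j => a j x) (fun j => b j x) k.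
Definition addS (a b : ser) : ser := fun k x => a k x + b k x.
Definition subS (a b : ser) : ser := fun k x => a k x - b k x.
Definition dS (a : 'I_n) (s : ser) : ser := fun k => pd a (s k).
Definition monom (m : int) (M : pt -> mat) : ser :=
  fun k x => if k == m then M x else 0.
Definition cstS (b : int -> mat) : ser := fun k _ => b k.
Definition truncle (m : int) (s : ser) : ser :=
  fun k x => if k <= m then s k x else 0.

(* [d/dx^a + A, M] = dM + [A, M] *)
Definition opcomm (a : 'I_n) (A M : ser) : ser :=
  addS (dS a M) (subS (mulS A M) (mulS M A)).
(* D^{-1} (d/dx^a + A) D - d/dx^a = D^{-1} dD + D^{-1} A D, written with an
   explicit inverse Dinv *)
Definition gauge (a : 'I_n) (A D Dinv : ser) : ser :=
  mulS Dinv (addS (dS a D) (mulS A D)).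

(* s is in Mat(n, O(U))[[hbar]] : holomorphic coefficients, no negative powers *)
Definition powser_on (U : set pt) (s : ser) :=
  (forall k, holo_on U (s k)) /\ (forall k x, k < 0 -> U x -> s k x = 0).

Definition ser_inverse_on (U : set pt) (D Dinv : ser) :=
  powser_on U D /\ powser_on U Dinv /\
  (forall k x, U x -> mulS D Dinv k x = monom 0 (fun _ => 1%:M) k x) /\
  (forall k x, U x -> mulS Dinv D k x = monom 0 (fun _ => 1%:M) k x).

(* b in Diag((hbar)) : constant Laurent series with diagonal coefficients *)
Definition diag_laurent (b : int -> mat) :=
  (forall k, is_diag_mx (b k)) /\ (exists N : int, forall k, k < N -> b k = 0).

(* ---------------- Frobenius manifold in flat coordinates ----------------
   C a x = the matrix C_a(x), with (C a x) g b = C^g_{ab}(x);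
   e1 = index of the unit vector field d/dx^1. *)
Definition frobenius_manifold (U : set pt) (C : 'I_n -> pt -> mat)
    (eta : mat) (e1 : 'I_n) :=
  open U /\
  (forall a, holo_on U (C a)) /\
  eta^T = eta /\ eta \in unitmx /\
  forall x, U x ->
  (forall a b g, C a x g b = C b x g a) /\
  (forall a b d e, \sum_g C a x g b * C g x e d = \sum_g C b x g d * C a x e g) /\
  C e1 x = 1%:M /\
  (forall a b d, \sum_g C a x g b * eta g d = \sum_g eta a g * C b x g d) /\
  (* the operators L_a = d_a - hbar^{-1} C_a pairwise commute: the
     hbar^{-1} and hbar^{-2} parts of [L_a, L_b] vanish *)
  (forall a b, pd a (C b) x = pd b (C a) x /\ C a x *m C b x = C b x *m C a x).

(* semisimplicity: T_x U is a direct sum of one-dimensional common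
   eigenspaces of all the multiplication operators C_a(x) *)
Definition semisimple_on (U : set pt) (C : 'I_n -> pt -> mat) :=
  forall x, U x -> exists P : mat, P \in unitmx /\
    (forall a, is_diag_mx (invmx P *m C a x *m P)) /\
    (forall i j : 'I_n, i != j ->
       exists a, (invmx P *m C a x *m P) i i != (invmx P *m C a x *m P) j j).

(* L_a = d/dx^a - hbar^{-1} C_a : the potential part *)
Definition Lpot (C : 'I_n -> pt -> mat) (a : 'I_n) : ser :=
  monom (-1) (fun x => - C a x).

Definition dressing_L (U : set pt) (C : 'I_n -> pt -> mat) (T Tinv : ser) :=
  ser_inverse_on U T Tinv /\
  exists h : 'I_n -> ser, forall a k x, U x ->
    is_diag_mx (h a k x) /\ (k < -1 -> h a k x = 0) /\
    gauge a (Lpot C a) T Tinv k x = h a k x.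

Definition Emx (i : 'I_n) : mat := delta_mx i i.

Definition qpot (C : 'I_n -> pt -> mat) (T0 : pt -> mat) (X : pt -> pt)
    (i : 'I_n) (u : pt) : mat :=
  \sum_a ('D_(cvec i) X u) 0 a *: (invmx (T0 (X u)) *m pd a T0 (X u)).

(* Ltilde_i = d/du^i + q_i(u) - hbar^{-1} e_i : the potential part *)
Definition Ltpot (C : 'I_n -> pt -> mat) (T0 : pt -> mat) (X : pt -> pt)
    (i : 'I_n) : ser :=
  addS (monom 0 (qpot C T0 X i)) (monom (-1) (fun _ => - Emx i)).

Definition dressing_Lt (V : set pt) (C : 'I_n -> pt -> mat) (T0 : pt -> mat)
    (X : pt -> pt) (Tt Ttinv : ser) :=
  ser_inverse_on V Tt Ttinv /\
  (forall u, V u -> Tt 0 u = 1%:M) /\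
  exists h : 'I_n -> ser, forall i k u, V u ->
    is_diag_mx (h i k u) /\ (k < 0 -> h i k u = 0) /\
    gauge i (Ltpot C T0 X i) Tt Ttinv k u
      = monom (-1) (fun _ => - Emx i) k u + h i k u.

Definition phi (T Tinv : ser) (b : int -> mat) : ser :=
  mulS (mulS T (cstS b)) Tinv.

End Defs.
Arguments cvec {K n}.
Arguments Emx {K n}.

(* T^-1 L_a T = d_a + h_a with h_a diagonal, and b is constant and diagonal,
   so [d_a + h_a, b] = 0; conjugating back by T gives [L_a, phi(b)] = 0, and
   likewise [Ltilde_i, phitilde(b)] = 0.  The potentials of L_a and Ltilde_i
   only have hbar^-1 and hbar^0 terms, hence the hbar^k coefficient of
   [L, phi(b)_{<=m}] is that of [L, phi(b)] = 0 for k < m, vanishes for k > m,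
   and for k = m misses exactly the commutator of the hbar^-1 term with
   phi(b)_{m+1}.  Identities between Laurent series are checked in rings of
   truncated block Toeplitz matrices, where the Cauchy product becomes matrix
   multiplication. *)

From HB Require Import structures.
From mathcomp Require Import all_boot all_order all_algebra.
From mathcomp Require Import all_classical all_reals all_analysis.
From mathcomp Require Import complex zify.
Import Order.TTheory GRing.Theory Num.Theory.
Import numFieldNormedType.Exports.
Local Open Scope classical_set_scope.
Local Open Scope ring_scope.
Set Implicit Arguments. Unset Strict Implicit. Unset Printing Implicit Defensive.

Section LaurentProduct.
Variables (K : numFieldType) (n : nat).
Local Notation mat := 'M[K]_n.
Implicit Types (a b : int -> mat) (N : int).

Definition vanish_below N a := forall j, j < N -> a j = 0.

Lemma vanish_belowW N N' a : N' <= N -> vanish_below N a -> vanish_below N' a.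
Proof. by move=> h va j hj; apply: va; lia. Qed.

Lemma lowb_vanish_below a N : vanish_below N a -> vanish_below (lowb a) a.
Proof.
move=> va; rewrite /lowb; case: pselect => [P|nP]; first by case: (cid P).
by exfalso; apply: nP; exists N.
Qed.

Definition window_sum a b N (L : nat) (k : int) :=
  \sum_(t < L) a (N + t%:Z) *m b (k - N - t%:Z).

Lemma window_sum_widen a b N Nb L L' k : vanish_below Nb b ->
  k - N - Nb < L%:Z -> (L <= L')%N -> window_sum a b N L' k = window_sum a b N L k.
Proof.
move=> vb hk hL; rewrite /window_sum (big_ord_widen L' (fun t : nat => a (N + t%:Z) *m b (k - N - t%:Z)) hL).
rewrite [RHS]big_mkcond /=; apply: eq_bigr => t _; case: ifP => // /negbT; rewrite -leqNgt => ht.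
by rewrite vb ?mulmx0 //; lia.
Qed.

Lemma window_sum_shift a b N d L k : vanish_below N a ->
  window_sum a b (N - d%:Z) (d + L) k = window_sum a b N L k.
Proof.
move=> va; rewrite /window_sum big_split_ord /= big1 ?add0r.
  by apply: eq_bigr => t _; congr (a _ *m b _); lia.
by move=> t _; rewrite va ?mul0mx //; have := ltn_ord t; lia.
Qed.

Lemma window_sum_start a b N1 N2 M1 M2 k : N1 <= N2 -> vanish_below N2 a ->
  vanish_below M1 b -> vanish_below M2 b ->
  window_sum a b N1 (absz (k - N1 - M1)%R).+1 k
  = window_sum a b N2 (absz (k - N2 - M2)%R).+1 k.
Proof.
move=> le12 va v1 v2; set d := absz (N2 - N1).
set L1 := (absz (k - N1 - M1)%R).+1; set L2 := (absz (k - N2 - M2)%R).+1.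
have -> : N1 = N2 - d%:Z by rewrite /d; lia.
rewrite -(window_sum_shift b d L2 k va).
rewrite -(@window_sum_widen _ _ _ M1 L1 (L1 + (d + L2))%N k v1) ?leq_addr //; last by rewrite /L1 /d; lia.
by rewrite -(@window_sum_widen _ _ _ M2 (d + L2) (L1 + (d + L2))%N k v2) ?leq_addl //; rewrite /L2; lia.
Qed.

(* [mulL] starts its window at the classically chosen [lowb a]; any known
   lower bounds of the supports give the same sum. *)
Lemma mulL_window a b Na Nb k : vanish_below Na a -> vanish_below Nb b ->
  mulL a b k = window_sum a b Na (absz (k - Na - Nb)%R).+1 k.
Proof.
move=> va vb; have la := lowb_vanish_below va; have lb := lowb_vanish_below vb.
rewrite /mulL -/(window_sum a b (lowb a) _ k).
have [le|lt] := lerP (lowb a) Na; first exact: window_sum_start.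
by symmetry; apply: window_sum_start => //; apply: ltW.
Qed.

Lemma mulL_vanish_below a b Na Nb :
  vanish_below Na a -> vanish_below Nb b -> vanish_below (Na + Nb) (mulL a b).
Proof.
move=> va vb k hk; rewrite (mulL_window k va vb) /window_sum big1 // => t _.
by rewrite vb ?mulmx0 //; lia.
Qed.

Lemma mulL_window_rev a b Na Nb k : vanish_below Na a -> vanish_below Nb b ->
  mulL a b k = \sum_(t < (absz (k - Na - Nb)%R).+1) a (k - Nb - t%:Z) *m b (Nb + t%:Z).
Proof.
move=> va vb; have [hk|hk] := ltrP (k - Na - Nb) 0.
  rewrite (mulL_vanish_below va vb) ?big1 //; last lia.
  by move=> t _; rewrite va ?mul0mx //; lia.
rewrite (mulL_window k va vb) /window_sum (reindex_inj rev_ord_inj) /=.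
apply: eq_bigr => t _; have := ltn_ord t => ht.
by congr (a _ *m b _); rewrite subSS; lia.
Qed.

Lemma mulL_comm a b Na Nb k : vanish_below Na a -> vanish_below Nb b ->
  (forall i j, a i *m b j = b j *m a i) -> mulL a b k = mulL b a k.
Proof.
move=> va vb ab; rewrite (mulL_window_rev k va vb) (mulL_window k vb va) /window_sum.
have -> : k - Na - Nb = k - Nb - Na by lia.
by apply: eq_bigr => t _; rewrite ab.
Qed.

Lemma mulL_addl a1 a2 b N Nb k :
  vanish_below N a1 -> vanish_below N a2 -> vanish_below Nb b ->
  mulL (fun j => a1 j + a2 j) b k = mulL a1 b k + mulL a2 b k.
Proof.
move=> v1 v2 vb.
have v12 : vanish_below N (fun j => a1 j + a2 j) by move=> j hj; rewrite v1 // v2 // addr0.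
rewrite (mulL_window k v12 vb) (mulL_window k v1 vb) (mulL_window k v2 vb).
by rewrite /window_sum -big_split /=; apply: eq_bigr => t _; rewrite mulmxDl.
Qed.

Lemma mulL_addr a b1 b2 N Nb k :
  vanish_below N a -> vanish_below Nb b1 -> vanish_below Nb b2 ->
  mulL a (fun j => b1 j + b2 j) k = mulL a b1 k + mulL a b2 k.
Proof.
move=> va v1 v2.
have v12 : vanish_below Nb (fun j => b1 j + b2 j) by move=> j hj; rewrite v1 // v2 // addr0.
rewrite (mulL_window k va v12) (mulL_window k va v1) (mulL_window k va v2).
by rewrite /window_sum -big_split /=; apply: eq_bigr => t _; rewrite mulmxDr.
Qed.

Lemma mulL0 a N k : vanish_below N a -> mulL a (fun _ => 0) k = 0.
Proof.
move=> va; have v0 : vanish_below 0 (fun _ => 0 : mat) by [].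
by rewrite (mulL_window k va v0) /window_sum big1 // => t _; rewrite mulmx0.
Qed.

Lemma vanish_below_single (m : int) (M : mat) :
  vanish_below m (fun j => if j == m then M else 0).
Proof. by move=> j hj; case: eqP => // e; lia. Qed.
Arguments vanish_below_single m M : clear implicits.

Lemma mulL_singlel (m : int) (M : mat) b Nb k : vanish_below Nb b ->
  mulL (fun j => if j == m then M else 0) b k = M *m b (k - m).
Proof.
move=> vb; rewrite (mulL_window k (vanish_below_single m M) vb) /window_sum.
rewrite big_ord_recl /= addr0 subr0 eqxx big1 ?addr0 // => t _.
by case: eqP => [|_]; [rewrite /bump /=; lia | rewrite mul0mx].
Qed.

Lemma mulL_singler (m : int) (M : mat) a Na k : vanish_below Na a ->
  mulL a (fun j => if j == m then M else 0) k = a (k - m) *m M.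
Proof.
move=> va; rewrite (mulL_window_rev k va (vanish_below_single m M)).
rewrite big_ord_recl /= addr0 subr0 eqxx big1 ?addr0 // => t _.
by case: eqP => [|_]; [rewrite /bump /=; lia | rewrite mulmx0].
Qed.

Definition oneL : int -> mat := fun k => if k == 0 then 1%:M else 0.

Lemma vanish_below_oneL : vanish_below 0 oneL.
Proof. exact: vanish_below_single. Qed.

Lemma mul1L a N k : vanish_below N a -> mulL oneL a k = a k.
Proof. by move=> va; rewrite (mulL_singlel 0 1%:M k va) mul1mx subr0. Qed.

Lemma mulL1 a N k : vanish_below N a -> mulL a oneL k = a k.
Proof. by move=> va; rewrite (mulL_singler 0 1%:M k va) mulmx1 subr0. Qed.

Definition supported_m10 a := forall j, j != -1 -> j != 0 -> a j = 0.

Lemma supported_m10E a : supported_m10 a ->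
  a = fun j => (if j == -1 then a (-1) else 0) + (if j == 0 then a 0 else 0).
Proof.
move=> sa; apply: funext => j.
have [->|h1] := eqVneq j (-1); first by rewrite (_ : -1 == 0 = false) ?addr0.
have [->|h0] := eqVneq j 0; first by rewrite add0r.
by rewrite addr0 sa.
Qed.

Lemma mulL_supported_m10l a b N k : supported_m10 a -> vanish_below N b ->
  mulL a b k = a (-1) *m b (k + 1) + a 0 *m b k.
Proof.
move=> sa vb; rewrite {1}(supported_m10E sa).
have v0 := vanish_belowW (lerN10 _) (vanish_below_single 0 (a 0)).
rewrite (mulL_addl _ (vanish_below_single (-1) (a (-1))) v0 vb).
by rewrite !(mulL_singlel _ _ _ vb) opprK subr0.
Qed.

Lemma mulL_supported_m10r a b N k : supported_m10 a -> vanish_below N b ->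
  mulL b a k = b (k + 1) *m a (-1) + b k *m a 0.
Proof.
move=> sa vb; rewrite {1}(supported_m10E sa).
have v0 := vanish_belowW (lerN10 _) (vanish_below_single 0 (a 0)).
rewrite (mulL_addr _ vb (vanish_below_single (-1) (a (-1))) v0).
by rewrite !(mulL_singler _ _ _ vb) opprK subr0.
Qed.

End LaurentProduct.

Arguments oneL {K n}.
Arguments vanish_below_oneL {K n}.

Section Toeplitz.
Variables (K : numFieldType) (n M : nat).
Local Notation mat := 'M[K]_n.
Implicit Types (a b : int -> mat) (N : int).

(* Upper triangular block Toeplitz matrix of the coefficients of a from index
   N on: for series vanishing below N it turns the Cauchy product into matrix
   multiplication, and the truncation size M can be taken as large as needed. *)
Definition toep N a : 'M['M[K]_n]_M :=
  \matrix_(i, j) if (i <= j)%N then a (N + (j%:Z - i%:Z)) else 0.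

Lemma toep_mul a b Na Nb : vanish_below Na a -> vanish_below Nb b ->
  toep (Na + Nb) (mulL a b) = toep Na a *m toep Nb b.
Proof.
move=> va vb; apply/matrixP => i j; rewrite !mxE.
under eq_bigr do rewrite !mxE.
case: leqP => hij; last first.
  rewrite big1 // => k _.
  by case: leqP => h1; case: leqP => h2 //; rewrite ?mul0r ?mulr0 //; lia.
rewrite (mulL_window _ va vb) /window_sum.
have -> : absz (Na + Nb + (j%:Z - i%:Z) - Na - Nb)%R = (j - i)%N by lia.
rewrite -(big_mkord xpredT (fun k : nat =>
  (if (i <= k)%N then a (Na + (k%:Z - i%:Z)) else 0) *
  (if (k <= j)%N then b (Nb + (j%:Z - k%:Z)) else 0))).
rewrite (big_cat_nat (leq0n i)) //=; last exact: ltnW.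
rewrite [X in _ = X + _]big_nat_cond [X in _ = X + _]big1 ?add0r; last first.
  by move=> k /andP[/andP[_ hk] _]; rewrite leqNgt hk mul0r.
rewrite (@big_cat_nat _ _ _ j.+1) //=; last exact: ltnW.
rewrite [X in _ = _ + X]big_nat_cond [X in _ = _ + X]big1 ?addr0; last first.
  by move=> k /andP[/andP[hk _] _]; rewrite (leqNgt k j) hk mulr0.
rewrite -[X in \sum_(X <= _ < _) _](add0n i) big_addn big_mkord subSn //.
apply: eq_bigr => t _; have ht := ltn_ord t.
rewrite leq_addl (_ : (t + i <= j)%N); last lia.
by congr (a _ * b _); lia.
Qed.

Lemma toep_mulE N a b Na Nb : N = Na + Nb ->
  vanish_below Na a -> vanish_below Nb b ->
  toep N (mulL a b) = toep Na a *m toep Nb b.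
Proof. by move=> ->; apply: toep_mul. Qed.

Lemma toep_mul0 a b : vanish_below 0 a -> vanish_below 0 b ->
  toep 0 (mulL a b) = toep 0 a *m toep 0 b.
Proof. by move=> va vb; have := toep_mul va vb; rewrite addr0. Qed.

Lemma toepD N a b : toep N (fun k => a k + b k) = toep N a + toep N b.
Proof. by apply/matrixP => i j; rewrite !mxE; case: ifP; rewrite ?addr0. Qed.

Lemma toepB N a b : toep N (fun k => a k - b k) = toep N a - toep N b.
Proof. by apply/matrixP => i j; rewrite !mxE; case: ifP; rewrite ?subr0. Qed.

Lemma toep0 N : toep N (fun _ => 0) = 0.
Proof. by apply/matrixP => i j; rewrite !mxE; case: ifP. Qed.

Lemma eq_toep N a b : a =1 b -> toep N a = toep N b.
Proof. by move=> ab; apply/matrixP => i j; rewrite !mxE ab. Qed.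

Lemma toep_oneL : toep 0 oneL = 1%:M.
Proof.
apply/matrixP => i j; rewrite !mxE add0r.
have [->|nij] := eqVneq i j; first by rewrite leqnn subrr /oneL eqxx.
case: leqP => // h; rewrite /oneL; case: eqP => // e.
by case/eqP: nij; apply: val_inj => /=; lia.
Qed.

Lemma toep_coef N a (j : 'I_M) (M_gt0 : (0 < M)%N) :
  toep N a (Ordinal M_gt0) j = a (N + j%:Z).
Proof. by rewrite mxE /= subr0. Qed.

(* [toep (-1) oneL] is the superdiagonal shift; it plays the role of hbar^-1. *)
Lemma toep_shift N a : vanish_below N a ->
  toep (N - 1) a = toep (-1) oneL *m toep N a.
Proof.
move=> va; rewrite -(toep_mulE (N := N - 1) _ (vanish_belowW (lerN10 _) vanish_below_oneL) va).
  by apply: eq_toep => k; rewrite (mul1L k va).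
by rewrite addrC.
Qed.

Lemma toep_shiftC N a : vanish_below N a ->
  toep (-1) oneL *m toep N a = toep N a *m toep (-1) oneL.
Proof.
move=> va; rewrite -toep_shift // -(toep_mulE (N := N - 1) _ va (vanish_belowW (lerN10 _) vanish_below_oneL)) //.
by apply: eq_toep => k; rewrite (mulL1 k va).
Qed.

End Toeplitz.

Arguments toep_mul {K n M a b Na Nb}.
Arguments toep_mulE {K n M N a b Na Nb}.
Arguments toep_mul0 {K n M a b}.
Arguments toep_shift {K n M N a}.
Arguments toep_shiftC {K n M N a}.
Arguments toep_oneL {K n M}.
Arguments eq_toep {K n M N a b}.
Arguments toepD {K n M} N a b.
Arguments toepB {K n M} N a b.
Arguments toep0 {K n M} N.

Lemma toep_coef_eq0 (K : numFieldType) (n : nat) N (a : int -> 'M[K]_n) k : N <= k ->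
  toep (absz (k - N)%R).+1 N a = 0 -> a k = 0.
Proof.
move=> le /matrixP/(_ (Ordinal (ltn0Sn _)) ord_max).
by rewrite toep_coef mxE /= (_ : N + _ = k) //; lia.
Qed.

(* Ring form of T [d + H, B] T^-1 = [d + A, T B T^-1]: dt and ds stand for
   the derivatives of t and s = t^-1, and the shift Z brings the derivative
   terms to the valuation of a. *)
Lemma gauge_commute (R : pzRingType) (t s dt ds a h B Z : R) :
  s * t = 1 -> t * s = 1 -> s * (Z * dt + a * t) = h -> dt * s + t * ds = 0 ->
  h * B = B * h -> Z * t = t * Z -> Z * B = B * Z -> Z * s = s * Z ->
  Z * (dt * B * s + t * B * ds) + (a * (t * B * s) - t * B * s * a) = 0.
Proof.
move=> st ts gauge dts hB Zt ZB Zs.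
have Zdt : Z * dt = t * h - a * t by rewrite -gauge mulrA ts mul1r addrK.
have Zds : Z * ds = - (s * (t * h - a * t) * s).
  have tds : t * ds = - (dt * s) by apply/eqP; rewrite -addr_eq0 addrC dts.
  by rewrite -[ds]mul1r -st -mulrA tds !mulrN !mulrA Zs -(mulrA s Z dt) Zdt.
have ZtBds : Z * (t * B * ds) = t * B * (Z * ds).
  by rewrite !mulrA Zt -(mulrA t Z B) ZB !mulrA.
have stK x : x * s * t = x by rewrite -mulrA st mulr1.
have tsK x : x * t * s = x by rewrite -mulrA ts mulr1.
rewrite mulrDr ZtBds Zds !mulrA Zdt.
rewrite !(mulrBl, mulrBr, mulrN, mulNr, mulrDl, mulrDr, mulrA) !stK !tsK.
rewrite -(mulrA t h B) hB !mulrA.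
by rewrite opprB (addrC (_ - _)) !subrKA subrr.
Qed.

Lemma is_diag_mx_comm (R : comPzRingType) (n : nat) (A B : 'M[R]_n) :
  is_diag_mx A -> is_diag_mx B -> A *m B = B *m A.
Proof. by move=> /diag_mxP[d ->] /diag_mxP[e ->]; exact: diag_mxC. Qed.

Section DressedCommutator.
Variables (K : numFieldType) (n : nat).
Variables (t s dt ds A H b : int -> 'M[K]_n) (Nb : int).
Hypotheses (vt : vanish_below 0 t) (vs : vanish_below 0 s).
Hypotheses (vdt : vanish_below 0 dt) (vds : vanish_below 0 ds).
Hypotheses (vA : vanish_below (-1) A) (vH : vanish_below (-1) H).
Hypothesis vb : vanish_below Nb b.
Hypotheses (st : forall k, mulL s t k = oneL k) (ts : forall k, mulL t s k = oneL k).
Hypothesis gauge_tH : forall k, mulL s (fun j => dt j + mulL A t j) k = H k.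
Hypothesis dts : forall k, mulL dt s k + mulL t ds k = 0.
Hypotheses (H_diag : forall j, is_diag_mx (H j)) (b_diag : forall j, is_diag_mx (b j)).

Let P := mulL (mulL t b) s.

Let vanish_below_conj x y : vanish_below 0 x -> vanish_below 0 y ->
  vanish_below Nb (mulL (mulL x b) y).
Proof.
by move=> vx vy; have := mulL_vanish_below (mulL_vanish_below vx vb) vy; rewrite add0r addr0.
Qed.

Let toep_conj M x y : vanish_below 0 x -> vanish_below 0 y ->
  toep M Nb (mulL (mulL x b) y) = toep M 0 x *m toep M Nb b *m toep M 0 y.
Proof.
move=> vx vy; rewrite (toep_mulE _ (mulL_vanish_below vx vb) vy) ?add0r ?addr0 //.
by rewrite (toep_mulE _ vx vb) ?add0r.
Qed.

Lemma dressed_commutator_eq0 k :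
  mulL (mulL dt b) s k + mulL (mulL t b) ds k + (mulL A P k - mulL P A k) = 0.
Proof.
pose D k := mulL (mulL dt b) s k + mulL (mulL t b) ds k; rewrite -/(D k).
have vD : vanish_below Nb D by move=> j hj; rewrite /D !vanish_below_conj ?addr0.
have vP : vanish_below Nb P := vanish_below_conj vt vs.
have [lt|ge] := ltrP k (Nb - 1).
  rewrite vD ?(mulL_vanish_below vA vP) ?(mulL_vanish_below vP vA) ?subrr ?addr0 //; lia.
apply: (toep_coef_eq0 (a := fun k => D k + (mulL A P k - mulL P A k)) ge).
set M := (absz (k - (Nb - 1))%R).+1.
pose Z := toep M (-1) (@oneL K n).
pose T := toep M 0 t; pose S := toep M 0 s; pose dT := toep M 0 dt; pose dS := toep M 0 ds.
pose A' := toep M (-1) A; pose H' := toep M (-1) H; pose B := toep M Nb b.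
have eD : toep M (Nb - 1) D = Z *m (dT *m B *m S + T *m B *m dS).
  by rewrite (toep_shift vD) /D toepD !toep_conj.
have eAP : toep M (Nb - 1) (mulL A P) = A' *m (T *m B *m S).
  by rewrite (toep_mulE _ vA vP) ?toep_conj // addrC.
have ePA : toep M (Nb - 1) (mulL P A) = T *m B *m S *m A'.
  by rewrite (toep_mulE _ vP vA) ?toep_conj.
rewrite toepD toepB eD eAP ePA.
have ST : S *m T = 1%:M by rewrite -toep_mul0 // (eq_toep st) toep_oneL.
have TS : T *m S = 1%:M by rewrite -toep_mul0 // (eq_toep ts) toep_oneL.
have dTS : dT *m S + T *m dS = 0 by rewrite -!toep_mul0 // -toepD (eq_toep dts) toep0.
have gauge_TH : S *m (Z *m dT + A' *m T) = H'.
  have vL : vanish_below (-1) (fun j => dt j + mulL A t j).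
    by move=> j hj; rewrite vdt ?(mulL_vanish_below vA vt) ?addr0 //; lia.
  have eL : toep M (-1) (fun j => dt j + mulL A t j) = Z *m dT + A' *m T.
    by rewrite toepD (toep_mulE _ vA vt) ?addr0 // -(toep_shift vdt) sub0r.
  by rewrite -eL -(toep_mulE (N := -1) _ vs vL) ?add0r // (eq_toep gauge_tH).
have HB : H' *m B = B *m H'.
  rewrite -(toep_mulE (addrC Nb (-1)) vH vb) -(toep_mulE (erefl (Nb - 1)) vb vH).
  apply: eq_toep => j; apply: (mulL_comm _ vH vb) => i l.
  exact: is_diag_mx_comm.
exact: (gauge_commute ST TS gauge_TH dTS HB (toep_shiftC vt) (toep_shiftC vb) (toep_shiftC vs)).
Qed.

End DressedCommutator.

Section MatrixProductRule.
Variables (K : numFieldType) (p q r : nat).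

Lemma cvg_mulmx {T : Type} (F : set_system T) {FF : Filter F}
    (f : T -> 'M[K]_(p, q)) (g : T -> 'M[K]_(q, r)) (A : 'M[K]_(p, q)) (B : 'M[K]_(q, r)) :
  f @ F --> A -> g @ F --> B -> (fun x => f x *m g x) @ F --> A *m B.
Proof.
move=> fA gB.
have cvg_bigsum (V : normedModType K) (I : Type) (s : seq I) (h : I -> T -> V) (l : I -> V) :
    (forall i, h i @ F --> l i) -> (fun x => \sum_(i <- s) h i x) @ F --> \sum_(i <- s) l i.
  by move=> hl; apply: (cvg_big (P := xpredT) add_continuous) => // i _; exact: hl.
have mulmxE (X : 'M[K]_(p, q)) (Y : 'M[K]_(q, r)) :
    X *m Y = \sum_i \sum_j (\sum_l X i l * Y l j) *: delta_mx i j.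
  rewrite [LHS]matrix_sum_delta.
  by apply: eq_bigr => i _; apply: eq_bigr => j _; rewrite mxE.
under eq_fun do rewrite mulmxE.
rewrite mulmxE; apply: (cvg_bigsum) => i; apply: (cvg_bigsum) => j.
apply: cvgZr_tmp; apply: (cvg_bigsum) => l; apply: cvgM.
  exact: cvg_comp _ _ fA (@coord_continuous K p q i l A).
exact: cvg_comp _ _ gB (@coord_continuous K q r l j B).
Qed.

Variable V : normedModType K.
Variables (f : V -> 'M[K]_(p, q)) (g : V -> 'M[K]_(q, r)) (x v : V).
Hypotheses (df : derivable f x v) (dg : derivable g x v).

Let der_mulmx :
  (fun h => h^-1 *: (((fun y => f y *m g y) \o shift x) (h *: v) - f x *m g x)) @ 0^'
    --> f x *m 'D_v g x + 'D_v f x *m g x.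
Proof.
have cf : f (h *: v + x) @[h --> 0^'] --> f x.
  suff : {for 0, continuous (fun h : K => f (h *: v + x))}.
    by move=> /continuous_withinNx; rewrite scale0r add0r.
  exact/differentiable_continuous/derivable1_diffP/(derivable1P _ _ _).1.
have quotE (h : K) : h^-1 *: (((fun y => f y *m g y) \o shift x) (h *: v) - f x *m g x)
   = f (h *: v + x) *m (h^-1 *: (g (h *: v + x) - g x)) + (h^-1 *: (f (h *: v + x) - f x)) *m g x.
  rewrite /= -scalemxAr -scalemxAl -scalerDr; congr (_ *: _).
  by rewrite mulmxBr mulmxBl addrA subrK.
under eq_fun do rewrite quotE.
by apply: cvgD; [exact: cvg_mulmx cf dg | exact: cvg_mulmx df (cvg_cst _)].
Qed.

Lemma derivable_mulmx : derivable (fun y => f y *m g y) x v.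
Proof. by apply/cvg_ex; eexists; exact: der_mulmx. Qed.

Lemma derive_mulmx : 'D_v (fun y => f y *m g y) x = f x *m 'D_v g x + 'D_v f x *m g x.
Proof. exact: cvg_lim der_mulmx. Qed.

End MatrixProductRule.

Section SeriesDerivative.
Variables (K : numFieldType) (n : nat) (U : set 'rV[K]_n).
Hypothesis U_open : open U.
Local Notation pt := 'rV[K]_n.
Implicit Types (F G : int -> pt -> 'M[K]_n) (v : pt).

Lemma derive_vanish_below v F N y : U y ->
  (forall z, U z -> vanish_below N (fun j => F j z)) ->
  vanish_below N (fun j => 'D_v (F j) y).
Proof.
move=> Uy F0 j hj; rewrite (@near_eq_derive _ _ _ (F j) (cst 0) y v) ?derive_cst //.
by apply: filterS (open_nbhs_nbhs (conj U_open Uy)) => z Uz; rewrite F0.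
Qed.

Lemma derive_mulL v F G NF NG y k : U y ->
  (forall z, U z -> vanish_below NF (fun j => F j z)) ->
  (forall z, U z -> vanish_below NG (fun j => G j z)) ->
  (forall j z, U z -> derivable (F j) z v) ->
  (forall j z, U z -> derivable (G j) z v) ->
  derivable (fun z => mulL (fun j => F j z) (fun j => G j z) k) y v /\
  'D_v (fun z => mulL (fun j => F j z) (fun j => G j z) k) y =
    mulL (fun j => 'D_v (F j) y) (fun j => G j y) k +
    mulL (fun j => F j y) (fun j => 'D_v (G j) y) k.
Proof.
move=> Uy F0 G0 dF dG; set L := (absz (k - NF - NG)%R).+1.
pose W := \sum_(t < L) (fun z => F (NF + t%:Z) z *m G (k - NF - t%:Z) z).
have WE : \forall z \near y, W z = mulL (fun j => F j z) (fun j => G j z) k.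
  apply: filterS (open_nbhs_nbhs (conj U_open Uy)) => z Uz.
  by rewrite /W fct_sumE (mulL_window k (F0 z Uz) (G0 z Uz)).
have dW (t : 'I_L) : derivable (fun z => F (NF + t%:Z) z *m G (k - NF - t%:Z) z) y v.
  by apply: derivable_mulmx; [apply: dF | apply: dG].
split; first exact: (near_eq_derivable WE (derivable_sum dW)).
rewrite -(near_eq_derive v WE) derive_sum //.
under eq_bigr do rewrite (derive_mulmx (dF _ _ Uy) (dG _ _ Uy)).
rewrite big_split /= addrC.
rewrite (mulL_window k (derive_vanish_below v Uy F0) (G0 y Uy)).
by rewrite (mulL_window k (F0 y Uy) (derive_vanish_below v Uy G0)).
Qed.

End SeriesDerivative.

Section DressedOperator.
Variables (K : numFieldType) (n : nat) (U : set 'rV[K]_n) (a : 'I_n).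
Variables (T Ti : ser K n) (b : int -> 'M[K]_n) (x : 'rV[K]_n).
Hypotheses (U_open : open U) (T_inv : ser_inverse_on U T Ti).
Hypotheses (b_laurent : diag_laurent b) (Ux : U x).

Let vT z : U z -> vanish_below 0 (fun j => T j z).
Proof. by move=> Uz j /T_inv.1.2; apply. Qed.

Let vTi z : U z -> vanish_below 0 (fun j => Ti j z).
Proof. by move=> Uz j /T_inv.2.1.2; apply. Qed.

Let dT j z : U z -> derivable (T j) z (cvec a).
Proof. by move/T_inv.1.1/diff_derivable. Qed.

Let dTi j z : U z -> derivable (Ti j) z (cvec a).
Proof. by move/T_inv.2.1.1/diff_derivable. Qed.

Local Notation t := (fun j => T j x).
Local Notation s := (fun j => Ti j x).
Local Notation dt := (fun j => 'D_(cvec a) (T j) x).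
Local Notation ds := (fun j => 'D_(cvec a) (Ti j) x).

Lemma derive_mulL_inverse k : mulL dt s k + mulL t ds k = 0.
Proof.
have [_ <-] := derive_mulL U_open k Ux vT vTi dT dTi.
rewrite (@near_eq_derive _ _ _ _ (cst (oneL k)) x (cvec a)) ?derive_cst //.
by apply: filterS (open_nbhs_nbhs (conj U_open Ux)) => z Uz; exact: T_inv.2.2.1.
Qed.

Lemma derive_phi k :
  'D_(cvec a) (phi T Ti b k) x = mulL (mulL dt b) s k + mulL (mulL t b) ds k.
Proof.
have [_ [Nb vb]] := b_laurent.
pose Tb j z := mulL (fun i => T i z) b j.
have vb' z : U z -> vanish_below Nb (fun i => cstS b i z) by [].
have db j z : U z -> derivable (cstS b j) z (cvec a) by move=> _; exact: derivable_cst.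
have vTb z : U z -> vanish_below Nb (fun j => Tb j z).
  by move=> Uz; rewrite -[Nb]add0r; exact: mulL_vanish_below (vT Uz) vb.
have dTb j z : U z -> derivable (Tb j) z (cvec a).
  by move=> Uz; exact: (derive_mulL U_open j Uz vT vb' dT db).1.
have DTb j : 'D_(cvec a) (Tb j) x = mulL dt b j.
  rewrite (derive_mulL U_open j Ux vT vb' dT db).2.
  have -> : (fun i => 'D_(cvec a) (cstS b i) x) = fun _ => 0.
    by apply: funext => i; exact: derive_cst.
  by rewrite (mulL0 _ (vT Ux)) addr0.
rewrite [phi _ _ _ _](_ : _ = fun z => mulL (fun j => Tb j z) (fun j => Ti j z) k) //.
rewrite (derive_mulL U_open k Ux vTb vTi dTb dTi).2.
by congr (mulL _ _ _ + _); apply: funext => j; exact: DTb.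
Qed.

Lemma opcomm_phi_eq0 (A H : ser K n) :
  vanish_below (-1) (fun j => A j x) -> vanish_below (-1) (fun j => H j x) ->
  (forall j, is_diag_mx (H j x)) -> (forall k, gauge a A T Ti k x = H k x) ->
  forall k, opcomm a A (phi T Ti b) k x = 0.
Proof.
move=> vA vH H_diag gauge_TH k; have [b_diag [Nb vb]] := b_laurent.
rewrite /opcomm /addS /subS /dS /pd derive_phi.
have vdt : vanish_below 0 dt := derive_vanish_below U_open _ Ux vT.
have vds : vanish_below 0 ds := derive_vanish_below U_open _ Ux vTi.
have st j : mulL s t j = oneL j by exact: T_inv.2.2.2.
have ts j : mulL t s j = oneL j by exact: T_inv.2.2.1.
exact: (dressed_commutator_eq0 (vT Ux) (vTi Ux) vdt vds vA vH vb st ts gauge_TH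
  derive_mulL_inverse H_diag b_diag).
Qed.

End DressedOperator.

Lemma opcomm_truncle (K : numFieldType) (n : nat) (a : 'I_n) (A P : ser K n)
    (m N : int) (x : 'rV[K]_n) :
  supported_m10 (fun j => A j x) -> vanish_below N (fun j => P j x) ->
  (forall k, opcomm a A P k x = 0) ->
  forall k, opcomm a A (truncle m P) k x =
    if k == m then P (m + 1) x *m A (-1) x - A (-1) x *m P (m + 1) x else 0.
Proof.
move=> sA vP AP k; have := AP k.
have vQ : vanish_below N (fun j => truncle m P j x).
  by move=> j hj; rewrite /truncle; case: ifP => // _; exact: vP.
rewrite /opcomm /addS /subS /dS /mulS /pd.
rewrite (mulL_supported_m10l _ sA vP) (mulL_supported_m10r _ sA vP).
rewrite (mulL_supported_m10l _ sA vQ) (mulL_supported_m10r _ sA vQ) /truncle.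
have D_if (c : bool) : 'D_(cvec a) (fun z => if c then P k z else 0) x =
    if c then 'D_(cvec a) (P k) x else 0.
  by case: c => //; exact: derive_cst.
rewrite D_if; case: ifP => h1; case: ifP => h2; case: ifP => h3; try (exfalso; lia).
- by [].
- move: h3 => /eqP -> AP0; rewrite mulmx0 mul0mx !add0r.
  apply/eqP; rewrite -subr_eq0 -AP0; apply/eqP; rewrite -addrA; congr (_ + _).
  by rewrite opprB (addrC (P (m + 1) x *m _)) opprD addrA addrAC addrC !addrA.
- by rewrite !(mulmx0, mul0mx, addr0, oppr0).
Qed.

Lemma is_diag_mxD (V : zmodType) (n : nat) (A B : 'M[V]_n) :
  is_diag_mx A -> is_diag_mx B -> is_diag_mx (A + B).
Proof.
move=> /is_diag_mxP A_diag /is_diag_mxP B_diag; apply/is_diag_mxP => i j ij.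
by rewrite mxE A_diag // B_diag // addr0.
Qed.

Lemma is_diag_mxN (V : zmodType) (n : nat) (A : 'M[V]_n) :
  is_diag_mx A -> is_diag_mx (- A).
Proof.
move=> /is_diag_mxP A_diag; apply/is_diag_mxP => i j ij.
by rewrite mxE A_diag // oppr0.
Qed.

Lemma is_diag_mx_Emx (K : numFieldType) (n : nat) (i : 'I_n) : is_diag_mx (Emx i : 'M[K]_n).
Proof.
apply/is_diag_mxP => r c; rewrite mxE.
by case: (eqVneq r i) => [->|] //=; case: (eqVneq c i) => [->|] //=; rewrite eqxx.
Qed.

Lemma vanish_below_phi (K : numFieldType) (n : nat) (W : set 'rV[K]_n)
    (D Dinv : ser K n) b Nb y :
  ser_inverse_on W D Dinv -> vanish_below Nb b -> W y ->
  vanish_below Nb (fun j => phi D Dinv b j y).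
Proof.
move=> [[_ D_pos] [[_ Dinv_pos] _]] vb Wy.
have vD : vanish_below 0 (fun j => D j y) by move=> j /D_pos; apply.
have vDinv : vanish_below 0 (fun j => Dinv j y) by move=> j /Dinv_pos; apply.
by have := mulL_vanish_below (mulL_vanish_below vD vb) vDinv; rewrite add0r addr0.
Qed.

Section TruncatedDressedCommutators.
Variables (K : numFieldType) (n : nat) (C : 'I_n -> 'rV[K]_n -> 'M[K]_n).
Variables (b : int -> 'M[K]_n).
Hypothesis b_laurent : diag_laurent b.

Lemma dressing_L_truncle (U : set 'rV[K]_n) (T Tinv : ser K n) a x k :
  open U -> dressing_L U C T Tinv -> U x ->
  opcomm a (Lpot C a) (truncle (-1) (phi T Tinv b)) k x
  = monom (-1) (fun y => C a y *m phi T Tinv b 0 y - phi T Tinv b 0 y *m C a y) k x.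
Proof.
move=> U_open [T_inv [h h_spec]] Ux; have [_ [Nb vb]] := b_laurent.
have vA : vanish_below (-1) (fun j => Lpot C a j x).
  by move=> j j_lt; rewrite /Lpot /monom; case: eqP => // j_eq; lia.
have vh : vanish_below (-1) (fun j => h a j x) by move=> j /(h_spec a j x Ux).2.1.
have commP := opcomm_phi_eq0 U_open T_inv b_laurent Ux vA vh
  (fun j => (h_spec a j x Ux).1) (fun j => (h_spec a j x Ux).2.2).
have sA : supported_m10 (fun j => Lpot C a j x).
  by move=> j /negPf j_m1 _; rewrite /Lpot /monom j_m1.
rewrite (opcomm_truncle _ sA (vanish_below_phi T_inv vb Ux) commP) /monom.
case: eqP => // _; rewrite /Lpot /monom eqxx addNr.
by rewrite mulmxN mulNmx opprK addrC.
Qed.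

Lemma dressing_Lt_truncle (V : set 'rV[K]_n) (T0 : 'rV[K]_n -> 'M[K]_n)
    (X : 'rV[K]_n -> 'rV[K]_n) (Tt Ttinv : ser K n) i y k :
  open V -> dressing_Lt V C T0 X Tt Ttinv -> V y ->
  opcomm i (Ltpot C T0 X i) (truncle 0 (phi Tt Ttinv b)) k y
  = monom 0 (fun z => Emx i *m phi Tt Ttinv b 1 z - phi Tt Ttinv b 1 z *m Emx i) k y.
Proof.
move=> V_open [T_inv [_ [h h_spec]]] Vy; have [_ [Nb vb]] := b_laurent.
pose H j z := monom (-1) (fun _ => - Emx i) j z + h i j z.
have vA : vanish_below (-1) (fun j => Ltpot C T0 X i j y).
  move=> j j_lt; rewrite /Ltpot /addS /monom.
  by case: eqP => j0; [lia|]; case: eqP => j1; [lia|]; rewrite addr0.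
have vH : vanish_below (-1) (fun j => H j y).
  move=> j j_lt; rewrite /H /monom (h_spec i j y Vy).2.1; last lia.
  by case: eqP => j1; [lia|]; rewrite addr0.
have H_diag j : is_diag_mx (H j y).
  apply: is_diag_mxD; last exact: (h_spec i j y Vy).1.
  rewrite /monom; case: eqP => _; last exact: mx0_is_diag.
  exact/is_diag_mxN/is_diag_mx_Emx.
have commP := opcomm_phi_eq0 V_open T_inv b_laurent Vy vA vH H_diag
  (fun j => (h_spec i j y Vy).2.2).
have sA : supported_m10 (fun j => Ltpot C T0 X i j y).
  by move=> j /negPf j_m1 /negPf j_0; rewrite /Ltpot /addS /monom j_m1 j_0 addr0.
rewrite (opcomm_truncle _ sA (vanish_below_phi T_inv vb Vy) commP) /monom.
case: eqP => // _; rewrite /Ltpot /addS /monom eqxx add0r (_ : -1 == 0 = false) // add0r.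
by rewrite mulmxN mulNmx opprK addrC.
Qed.

End TruncatedDressedCommutators.

Unset Implicit Arguments.

Theorem mainTheorem4 (R : realType) (n : nat) (n_gt0 : (0 < n)%N)
  (U : set 'rV[R[i]]_n) (C : 'I_n -> 'rV[R[i]]_n -> 'M[R[i]]_n)
  (eta : 'M[R[i]]_n)
  (* semisimple Frobenius manifold on U, unit d/dx^1 *)
  (HF : frobenius_manifold U C eta (Ordinal n_gt0))
  (HSS : semisimple_on U C)
  (* T0(x): columns v_i(x) in theta_i; u : canonical coordinates with
     T0^{-1} C_a T0 = a_a = diag(du/dx^a); X = inverse coordinate change *)
  (T0 : 'rV[R[i]]_n -> 'M[R[i]]_n) (u : 'rV[R[i]]_n -> 'rV[R[i]]_n)
  (X : 'rV[R[i]]_n -> 'rV[R[i]]_n)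
  (HT0 : holo_on U T0 /\ forall x, U x -> T0 x \in unitmx)
  (Hu : holo_on U u /\
        forall a x, U x -> invmx (T0 x) *m C a x *m T0 x = diag_mx ('D_(cvec a) u x))
  (V : set 'rV[R[i]]_n) (HV : V = u @` U)
  (HX : open_set V /\ holo_on V X /\ forall x, U x -> X (u x) = x)
  (* dressing transformations *)
  (T Tinv : ser R[i] n) (HT : dressing_L U C T Tinv)
  (Tt Ttinv : ser R[i] n) (HTt : dressing_Lt V C T0 X Tt Ttinv) :
  forall b : int -> 'M[R[i]]_n, diag_laurent b ->
    (forall (a : 'I_n) (x : 'rV[R[i]]_n) (k : int), U x ->
       opcomm a (Lpot C a) (truncle (-1) (phi T Tinv b)) k x
       = monom (-1) (fun y => C a y *m phi T Tinv b 0 y - phi T Tinv b 0 y *m C a y) k x)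
 /\ (forall (i : 'I_n) (y : 'rV[R[i]]_n) (k : int), V y ->
       opcomm i (Ltpot C T0 X i) (truncle 0 (phi Tt Ttinv b)) k y
       = monom 0 (fun z => Emx i *m phi Tt Ttinv b 1 z - phi Tt Ttinv b 1 z *m Emx i) k y).
Proof.
move=> b b_laurent; split.
- by move=> a x k Ux; exact: (dressing_L_truncle b_laurent a k HF.1 HT Ux).
- by move=> i y k Vy; exact: (dressing_Lt_truncle b_laurent i k HX.1 HTt Vy).
Qed.
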